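(* Let $Y:(0,\infty)\times(0,\infty)\times[0,1]\to(0,\infty)$, $(K,L,\lambda)\mapsto Y(K,L,\lambda)$, be a smooth (in particular twice continuously differentiable) function, viewed as a family of production functions indexed by the labor share $\lambda$, with constant returns to scale: $Y(cK,cL,\lambda)=c\,Y(K,L,\lambda)$ for all $c>0$, $K,L>0$, $\lambda\in[0,1]$. Define the wage $w(K,L,\lambda)=\lambda\,Y(K,L,\lambda)/L$, and let $k=K/L$ denote the capital-to-labor ratio. Call a wage-maximizing labor share any $\lambda^*\in[0,1]$ maximizing $\lambda\mapsto w(K,L,\lambda)$ over $[0,1]$, and call $w(K,L,\lambda^* )$ the maximum wage. Then: (a) The wage-maximizing labor share(s) and the maximum wage depend on $(K,L)$ only through the capital-to-labor ratio $k=K/L$. (b) Fix $(K,L)$. Suppose there exists at least one $\lambda\in(0,1)$ satisfying the first-order condition $\lambda=-1\big/\left(\partial \ln Y/\partial\lambda\right)$, where the derivative is evaluated at $(K,L,\lambda)$. If at every $\lambda\in(0,1)$ satisfying this first-order condition the second-order condition $\partial^2\ln Y/\partial\lambda^2<0$ holds, then the wage-maximizing labor share is unique and lies strictly between $0$ and $1$.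
   Context: Here $K$ is capital, $L$ labor, $Y$ output, and $\lambda$ the labor share of output; under constant returns to scale the wage is $w=\lambda\,(Y/L)$. The derivatives $\partial\ln Y/\partial\lambda$ and $\partial^2\ln Y/\partial\lambda^2$ are partial derivatives of $\ln Y(K,L,\lambda)$ with respect to $\lambda$ with $K,L$ held fixed. *)

From Stdlib Require Import Reals.
From Coquelicot Require Import Coquelicot.
Open Scope R_scope.

(* A family of production functions Y(K,L,lambda); we use a total function
   R -> R -> R -> R, only its values on (0,oo)x(0,oo)x[0,1] matter. *)
Definition prodfam := R -> R -> R -> R.

Definition positive_on_domain (Y : prodfam) : Prop :=
  forall K L lam, 0 < K -> 0 < L -> 0 <= lam <= 1 -> 0 < Y K L lam.

Definition CRS (Y : prodfam) : Prop :=
  forall c K L lam, 0 < c -> 0 < K -> 0 < L -> 0 <= lam <= 1 ->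
    Y (c * K) (c * L) lam = c * Y K L lam.

(* Regularity in lambda (consequence of smoothness of Y on its domain):
   for K, L > 0, lambda |-> Y K L lambda is continuous on [0,1]
   (within [0,1], i.e. one-sided at the endpoints) and infinitely
   differentiable on (0,1). *)
Definition smooth_in_lambda (Y : prodfam) : Prop :=
  forall K L, 0 < K -> 0 < L ->
    (forall lam, 0 <= lam <= 1 ->
       filterlim (Y K L) (within (fun x => 0 <= x <= 1) (locally lam))
                 (locally (Y K L lam))) /\
    (forall n lam, 0 < lam < 1 -> ex_derive_n (Y K L) n lam).

Definition wage (Y : prodfam) (K L lam : R) : R := lam * Y K L lam / L.

Definition is_wage_max (Y : prodfam) (K L lam : R) : Prop :=
  0 <= lam <= 1 /\ forall mu, 0 <= mu <= 1 -> wage Y K L mu <= wage Y K L lam.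

Definition dlnY (Y : prodfam) (K L lam : R) : R :=
  Derive (fun m => ln (Y K L m)) lam.

Definition d2lnY (Y : prodfam) (K L lam : R) : R :=
  Derive (fun m => Derive (fun m' => ln (Y K L m')) m) lam.

From Stdlib Require Import Reals Lra.
From Coquelicot Require Import Coquelicot.
Open Scope R_scope.

(* Part (a): constant returns to scale give w(K, L, lambda) = w(K/L, 1, lambda).
   Part (b): with g = ln w, one has g' = dlnY + 1/lambda =: h, so the FOC says
   h = 0 and the SOC gives h' = d2lnY - 1/lambda^2 < 0 at every zero of h.
   Hence every critical point of g in (0,1) is a strict local maximum, so g has
   no interior local minimum; a minimum of g on a segment joining the given FOC
   point to any other point then forces g to be smaller at that other point.
   The endpoints are handled by w(0) = 0 and by continuity at 1. *)

Lemma is_derive_neg_sign (f : R -> R) (x d : R) : is_derive f x d -> d < 0 ->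
  exists del, 0 < del /\
    (forall t, x < t < x + del -> f t < f x) /\
    (forall t, x - del < t < x -> f x < f t).
Proof.
  intros Hd Hneg. apply is_derive_Reals in Hd.
  destruct (Hd (- d)) as [[del Hdel] Hq]; [lra|].
  assert (Hslope : forall t, t <> x -> Rabs (t - x) < del ->
            (f t - f x) * (t - x) < 0).
  { intros t Ht Hdist.
    specialize (Hq (t - x) ltac:(lra) Hdist).
    replace (x + (t - x)) with t in Hq by ring.
    apply Rabs_def2 in Hq.
    replace ((f t - f x) * (t - x)) with ((f t - f x) / (t - x) * (t - x) ^ 2)
      by (field; lra).
    apply Rmult_neg_pos; [lra | apply pow2_gt_0; lra]. }
  exists del. split; [exact Hdel|]. split; intros t Ht.
  - assert (Hs := Hslope t ltac:(lra) ltac:(rewrite Rabs_right; lra)). nra.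
  - assert (Hs := Hslope t ltac:(lra) ltac:(rewrite Rabs_left; lra)). nra.
Qed.

Section CriticalPoints.
Variables (g h dh : R -> R) (a b : R).
Hypothesis g_derive : forall t, a < t < b -> is_derive g t (h t).
Hypothesis h_derive : forall t, a < t < b -> is_derive h t (dh t).
Hypothesis dh_neg_at_roots : forall t, a < t < b -> h t = 0 -> dh t < 0.

Lemma deriv_neg_decreasing l r : a < l -> l < r -> r < b ->
  (forall c, l < c < r -> h c < 0) -> g r < g l.
Proof.
  intros Hal Hlr Hrb Hneg.
  destruct (MVT_cor2 g h l r Hlr) as [c [Hmvt Hc]].
  { intros c Hc. apply is_derive_Reals, g_derive. lra. }
  assert (h c * (r - l) < 0) by (apply Rmult_neg_pos; [apply Hneg|]; lra).
  lra.
Qed.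

Lemma deriv_pos_increasing l r : a < l -> l < r -> r < b ->
  (forall c, l < c < r -> 0 < h c) -> g l < g r.
Proof.
  intros Hal Hlr Hrb Hpos.
  destruct (MVT_cor2 g h l r Hlr) as [c [Hmvt Hc]].
  { intros c Hc. apply is_derive_Reals, g_derive. lra. }
  assert (0 < h c * (r - l)) by (apply Rmult_lt_0_compat; [apply Hpos|]; lra).
  lra.
Qed.

Lemma critical_point_right x r : a < x -> x < r -> r < b -> h x = 0 ->
  exists t, x < t < r /\ g t < g x.
Proof.
  intros Hax Hxr Hrb Hhx.
  destruct (is_derive_neg_sign h x (dh x)) as [del [Hdel [Hright _]]];
    [apply h_derive; lra | apply dh_neg_at_roots; lra |].
  pose proof (Rmin_l del (r - x)); pose proof (Rmin_r del (r - x)).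
  pose proof (Rmin_pos del (r - x) Hdel ltac:(lra)).
  exists (x + Rmin del (r - x) / 2). split; [lra|].
  apply deriv_neg_decreasing; try lra.
  intros c Hc. rewrite <- Hhx. apply Hright. lra.
Qed.

Lemma critical_point_left l x : a < l -> l < x -> x < b -> h x = 0 ->
  exists t, l < t < x /\ g t < g x.
Proof.
  intros Hal Hlx Hxb Hhx.
  destruct (is_derive_neg_sign h x (dh x)) as [del [Hdel [_ Hleft]]];
    [apply h_derive; lra | apply dh_neg_at_roots; lra |].
  pose proof (Rmin_l del (x - l)); pose proof (Rmin_r del (x - l)).
  pose proof (Rmin_pos del (x - l) Hdel ltac:(lra)).
  exists (x - Rmin del (x - l) / 2). split; [lra|].
  apply deriv_pos_increasing; try lra.
  intros c Hc. rewrite <- Hhx. apply Hleft. lra.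
Qed.

(* The minimum of [g] on [l, r] is interior, hence a critical point, and
   critical points are strict local maxima. *)
Lemma no_interior_dip l s r : a < l -> l < s -> s < r -> r < b ->
  g s < g l -> g s < g r -> False.
Proof.
  intros Hal Hls Hsr Hrb Hsl Hsr'.
  destruct (continuity_ab_min g l r) as [m [Hmin Hm]]; [lra| |].
  { intros c Hc. apply derivable_continuous_pt. exists (h c).
    apply is_derive_Reals, g_derive. lra. }
  assert (Hgm : g m <= g s) by (apply Hmin; lra).
  assert (Hlm : l < m) by (destruct (Req_dec m l); [subst; lra | lra]).
  assert (Hmr : m < r) by (destruct (Req_dec m r); [subst; lra | lra]).
  assert (Hcrit : h m = 0).
  { assert (Hd : derivable_pt_lim g m (h m)) by (apply is_derive_Reals, g_derive; lra).
    exact (deriv_minimum g l r m (exist _ (h m) Hd) Hlm Hmr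
             (fun c Hlc Hcr => Hmin c ltac:(lra))). }
  destruct (critical_point_right m r) as [t [Ht Hgt]]; try lra.
  assert (g m <= g t) by (apply Hmin; lra). lra.
Qed.

Lemma critical_point_strict_max x t : a < x < b -> h x = 0 -> a < t < b -> t <> x ->
  g t < g x.
Proof.
  intros Hx Hhx Ht Hne. apply Rnot_le_lt. intros Hle.
  destruct (Rtotal_order t x) as [Hlt | [Heq | Hgt]]; [| contradiction |].
  - destruct (critical_point_left t x) as [s [Hs Hgs]]; try lra.
    apply (no_interior_dip t s x); lra.
  - destruct (critical_point_right x t) as [s [Hs Hgs]]; try lra.
    apply (no_interior_dip x s t); lra.
Qed.

Lemma critical_point_nonincreasing_right x d t : a < x -> x < d -> d < t -> t < b ->
  h x = 0 -> g t <= g d.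
Proof.
  intros Hax Hxd Hdt Htb Hhx. apply Rnot_lt_le. intros Hlt.
  apply (no_interior_dip x d t); try lra.
  apply critical_point_strict_max; lra.
Qed.

End CriticalPoints.

Lemma le_of_filterlim_left (f : R -> R) (D : R -> Prop) d b c :
  d < b -> (forall t, d < t < b -> D t) ->
  filterlim f (within D (locally b)) (locally (f b)) ->
  (forall t, d < t < b -> f t <= c) -> f b <= c.
Proof.
  intros Hdb HD Hlim Hle.
  assert (Hdel : 0 < b - d) by lra.
  apply (closed_filterlim_loc (F := at_left b) f (fun v => v <= c)).
  - eapply filterlim_filter_le_1; [|exact Hlim].
    intros P [del HP]. exists (mkposreal _ (Rmin_pos _ _ (cond_pos del) Hdel)).
    simpl. intros t Hball Htb.
    pose proof (Rmin_l del (b - d)); pose proof (Rmin_r del (b - d)).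
    assert (Ht : Rabs (t - b) < Rmin del (b - d)) by exact Hball.
    apply Rabs_def2 in Ht.
    apply HP; [apply (Rlt_le_trans _ _ _ Hball); simpl; lra | apply HD; lra].
  - exists (mkposreal _ Hdel). simpl. intros t Hball Htb.
    assert (Ht : Rabs (t - b) < b - d) by exact Hball.
    apply Rabs_def2 in Ht. apply Hle. lra.
  - apply closed_le.
Qed.

(* The case [D = 0] is excluded because [-1 / 0 = 0] in Rocq. *)
Lemma eq_neg1_div_iff (t D : R) : t <> 0 -> (t = -1 / D <-> D + / t = 0).
Proof.
  intros Ht. split; intros H.
  - destruct (Req_dec D 0) as [HD | HD].
    + rewrite HD in H. unfold Rdiv in H. rewrite Rinv_0, Rmult_0_r in H. contradiction.
    + rewrite H. field. exact HD.
  - replace D with (- / t) by lra. field. exact Ht.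
Qed.

Section Wage.
Variables (Y : prodfam) (K L : R).
Hypothesis Ypos : positive_on_domain Y.
Hypothesis Ysmooth : smooth_in_lambda Y.
Hypothesis K_pos : 0 < K.
Hypothesis L_pos : 0 < L.

Lemma ex_derive_Y t : 0 < t < 1 -> ex_derive (Y K L) t.
Proof. intros Ht. exact (proj2 (Ysmooth K L K_pos L_pos) 1%nat t Ht). Qed.

Lemma ex_derive_Derive_Y t : 0 < t < 1 -> ex_derive (Derive (Y K L)) t.
Proof. intros Ht. exact (proj2 (Ysmooth K L K_pos L_pos) 2%nat t Ht). Qed.

Lemma wage_pos t : 0 < t <= 1 -> 0 < wage Y K L t.
Proof.
  intros Ht. unfold wage.
  apply Rdiv_lt_0_compat; [apply Rmult_lt_0_compat; [|apply Ypos]|]; lra.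
Qed.

Lemma dlnY_quotient t : 0 < t < 1 -> dlnY Y K L t = Derive (Y K L) t / Y K L t.
Proof.
  intros Ht. apply is_derive_unique.
  assert (Hd := ex_derive_Y t Ht). assert (Hp : 0 < Y K L t) by (apply Ypos; lra).
  auto_derive; [exact (conj Hd (conj Hp I)) | now rewrite Rmult_1_l].
Qed.

Lemma is_derive_dlnY t : 0 < t < 1 -> is_derive (dlnY Y K L) t (d2lnY Y K L t).
Proof.
  intros Ht. apply Derive_correct.
  apply (ex_derive_ext_loc (fun u => Derive (Y K L) u / Y K L u)).
  - apply (locally_open (fun u => 0 < u < 1));
      [apply open_and; [apply open_gt | apply open_lt] | | exact Ht].
    intros u Hu. symmetry. apply dlnY_quotient. exact Hu.
  - assert (H1 := ex_derive_Y t Ht). assert (H2 := ex_derive_Derive_Y t Ht).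
    assert (Hp : 0 < Y K L t) by (apply Ypos; lra).
    auto_derive. repeat split; auto. lra.
Qed.

Lemma is_derive_ln_wage t : 0 < t < 1 ->
  is_derive (fun u => ln (wage Y K L u)) t (dlnY Y K L t + / t).
Proof.
  intros Ht. rewrite dlnY_quotient by exact Ht. unfold wage.
  assert (Hd := ex_derive_Y t Ht). assert (Hp : 0 < Y K L t) by (apply Ypos; lra).
  assert (Hw : 0 < t * Y K L t / L) by (apply wage_pos; lra).
  auto_derive.
  - repeat split; auto.
  - change (fun x => Y K L x) with (Y K L). field. lra.
Qed.

Lemma is_derive_dlnY_plus_inv t : 0 < t < 1 ->
  is_derive (fun u => dlnY Y K L u + / u) t (d2lnY Y K L t - / t ^ 2).
Proof.
  intros Ht. apply (is_derive_plus (dlnY Y K L) (fun u => / u)).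
  - apply is_derive_dlnY. exact Ht.
  - auto_derive; [lra | field; lra].
Qed.

Lemma filterlim_wage_1 :
  filterlim (wage Y K L) (within (fun u => 0 <= u <= 1) (locally 1))
    (locally (wage Y K L 1)).
Proof.
  unfold wage.
  apply (filterlim_comp_2 (G := locally 1) (H := locally (Y K L 1))
           (fun u => u) (Y K L) (fun u v => u * v / L)).
  - apply (filterlim_filter_le_1 _ (filter_le_within _)), filterlim_id.
  - apply (proj1 (Ysmooth K L K_pos L_pos)). lra.
  - apply (filterlim_comp _ _ _ (fun z : R * R => fst z * snd z) (fun v => v / L)
             _ (locally (1 * Y K L 1))).
    + exact (@filterlim_mult R_AbsRing 1 (Y K L 1)).
    + apply (ex_derive_continuous (K := R_AbsRing) (V := R_NormedModule) (fun v => v / L)).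
      auto_derive. lra.
Qed.

Lemma wage_lt_at_critical x :
  0 < x < 1 -> x = -1 / dlnY Y K L x ->
  (forall t, 0 < t < 1 -> t = -1 / dlnY Y K L t -> d2lnY Y K L t < 0) ->
  forall mu, 0 <= mu <= 1 -> mu <> x -> wage Y K L mu < wage Y K L x.
Proof.
  intros Hx Hfoc Hsoc.
  set (g := fun u => ln (wage Y K L u)).
  set (h := fun u => dlnY Y K L u + / u).
  set (dh := fun u => d2lnY Y K L u - / u ^ 2).
  assert (Hhx : h x = 0) by (apply eq_neg1_div_iff; lra).
  assert (Hroots : forall t, 0 < t < 1 -> h t = 0 -> dh t < 0).
  { intros t Ht Hht. apply eq_neg1_div_iff in Hht; [|lra].
    assert (0 < / t ^ 2) by (apply Rinv_0_lt_compat, pow_lt; lra).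
    specialize (Hsoc t Ht Hht). unfold dh. lra. }
  assert (Hinterior : forall t, 0 < t < 1 -> t <> x -> wage Y K L t < wage Y K L x).
  { intros t Ht Hne. apply ln_lt_inv; [apply wage_pos; lra.. |].
    exact (critical_point_strict_max g h dh 0 1
             is_derive_ln_wage is_derive_dlnY_plus_inv Hroots x t Hx Hhx Ht Hne). }
  intros mu Hmu Hne.
  destruct (Req_dec mu 0) as [-> | H0]; [|destruct (Req_dec mu 1) as [-> | H1]].
  - unfold wage at 1. rewrite Rmult_0_l, Rdiv_0_l. apply wage_pos. lra.
  - set (d := (x + 1) / 2).
    assert (Hd : x < d < 1) by (unfold d; lra). clearbody d.
    apply (Rle_lt_trans _ (wage Y K L d)); [|apply Hinterior; lra].
    apply (le_of_filterlim_left _ (fun u => 0 <= u <= 1) d);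
      [lra | intros t Ht; lra | apply filterlim_wage_1 |].
    intros t Ht. apply Rnot_lt_le. intros Hlt.
    apply ln_increasing in Hlt; [|apply wage_pos; lra].
    assert (g t <= g d).
    { apply (critical_point_nonincreasing_right g h dh 0 1
               is_derive_ln_wage is_derive_dlnY_plus_inv Hroots x); lra. }
    unfold g in *. lra.
  - apply Hinterior; lra.
Qed.

End Wage.

Lemma is_wage_max_of_strict (Y : prodfam) K L x : 0 <= x <= 1 ->
  (forall mu, 0 <= mu <= 1 -> mu <> x -> wage Y K L mu < wage Y K L x) ->
  is_wage_max Y K L x /\ forall mu, is_wage_max Y K L mu -> mu = x.
Proof.
  intros Hx Hlt. split.
  - split; [exact Hx|]. intros mu Hmu.
    destruct (Req_dec mu x) as [-> | Hne]; [lra | left; apply Hlt; auto].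
  - intros mu [Hmu Hmax].
    destruct (Req_dec mu x) as [Heq | Hne]; [exact Heq|].
    specialize (Hlt mu Hmu Hne). specialize (Hmax x Hx). lra.
Qed.

Lemma wage_CRS (Y : prodfam) K L lam : CRS Y -> 0 < K -> 0 < L -> 0 <= lam <= 1 ->
  wage Y K L lam = wage Y (K / L) 1 lam.
Proof.
  intros Hcrs HK HL Hlam. unfold wage.
  replace (Y K L lam) with (Y (L * (K / L)) (L * 1) lam) by (f_equal; field; lra).
  rewrite Hcrs by (try apply Rdiv_lt_0_compat; lra).
  field. lra.
Qed.

Section SameWage.
Variables (Y : prodfam) (K L K' L' : R).
Hypothesis same_wage : forall lam, 0 <= lam <= 1 -> wage Y K L lam = wage Y K' L' lam.

Lemma is_wage_max_ext lam : is_wage_max Y K L lam <-> is_wage_max Y K' L' lam.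
Proof.
  unfold is_wage_max.
  split; intros [Hlam Hmax]; split; auto; intros mu Hmu; specialize (Hmax mu Hmu).
  - rewrite <- !same_wage; auto.
  - rewrite !same_wage; auto.
Qed.

Lemma wage_max_ext lam lam' : is_wage_max Y K L lam -> is_wage_max Y K' L' lam' ->
  wage Y K L lam = wage Y K' L' lam'.
Proof.
  intros [Hlam Hmax] [Hlam' Hmax'].
  specialize (Hmax lam' Hlam'). specialize (Hmax' lam Hlam).
  rewrite !same_wage in Hmax by assumption. rewrite same_wage by assumption. lra.
Qed.

End SameWage.

Theorem theorem1 (Y : prodfam)
  (Hpos : positive_on_domain Y) (Hcrs : CRS Y) (Hsmooth : smooth_in_lambda Y) :
  (* (a) maximizers and maximum wage depend only on k = K/L *)
  (forall K L K' L', 0 < K -> 0 < L -> 0 < K' -> 0 < L' -> K / L = K' / L' ->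
     (forall lam, is_wage_max Y K L lam <-> is_wage_max Y K' L' lam) /\
     (forall lam lam', is_wage_max Y K L lam -> is_wage_max Y K' L' lam' ->
        wage Y K L lam = wage Y K' L' lam'))
  /\
  (* (b) FOC solvable + SOC at every FOC point => unique interior maximizer *)
  (forall K L, 0 < K -> 0 < L ->
     (exists lam, 0 < lam < 1 /\ lam = -1 / dlnY Y K L lam) ->
     (forall lam, 0 < lam < 1 -> lam = -1 / dlnY Y K L lam -> d2lnY Y K L lam < 0) ->
     exists lam, 0 < lam < 1 /\ is_wage_max Y K L lam /\
       forall mu, is_wage_max Y K L mu -> mu = lam).
Proof.
  split.
  - intros K L K' L' HK HL HK' HL' Hk.
    assert (Hw : forall lam, 0 <= lam <= 1 -> wage Y K L lam = wage Y K' L' lam).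
    { intros lam Hlam. rewrite (wage_CRS Y K L), (wage_CRS Y K' L'), Hk; auto. }
    split; [apply is_wage_max_ext | apply wage_max_ext]; exact Hw.
  - intros K L HK HL [x [Hx Hfoc]] Hsoc.
    exists x. split; [exact Hx|].
    apply is_wage_max_of_strict; [lra|].
    exact (wage_lt_at_critical Y K L Hpos Hsmooth HK HL x Hx Hfoc Hsoc).
Qed.
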